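(* Let $\mathbf C=(\mathbf C_\tau,q_n^{\mathbf C},\mathsf e_i^{\mathbf C})$ be a minimal clone $\tau$-algebra, let $\mathrm{Var}(\mathbf C_\tau)$ be the variety of $\tau$-algebras generated by $\mathbf C_\tau$ and $\mathrm{Var}(\mathbf C)$ the variety of clone $\tau$-algebras generated by $\mathbf C$. Then: (i) $\mathbf C_\tau$ is the free algebra over a countable set of generators (namely $\{\mathsf e_1^{\mathbf C},\mathsf e_2^{\mathbf C},\dots\}$) in $\mathrm{Var}(\mathbf C_\tau)$; (ii) $\mathbf C$ is the clone $\mathrm{Var}(\mathbf C_\tau)$-algebra; (iii) $\mathbf C$ is the free algebra over an empty set of generators in $\mathrm{Var}(\mathbf C)$.
   Context: A clone $\tau$-algebra is an algebra $\mathbf C=(C,\sigma^{\mathbf C}\ (\sigma\in\tau),q_n^{\mathbf C}\ (n\ge0),\mathsf e_i^{\mathbf C}\ (i\ge1))$ with $\mathsf e_i$ nullary, $q_n$ of arity $n+1$, satisfying: (C1) $q_n(\mathsf e_i,x_1,\dots,x_n)=x_i$ ($1\le i\le n$); (C2) $q_n(\mathsf e_j,x_1,\dots,x_n)=\mathsf e_j$ ($j>n$); (C3) $q_n(x,\mathsf e_1,\dots,\mathsf e_n)=x$; (C4) $q_k(x,y_1,\dots,y_k)=q_n(x,y_1,\dots,y_k,\mathsf e_{k+1},\dots,\mathsf e_n)$ ($n>k$); (C5) $q_n(q_n(x,\mathbf y),\mathbf z)=q_n(x,q_n(y_1,\mathbf z),\dots,q_n(y_n,\mathbf z))$; (C6)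 $q_n(\sigma(x_1,\dots,x_k),\mathbf y)=\sigma(q_n(x_1,\mathbf y),\dots,q_n(x_k,\mathbf y))$ for $\sigma\in\tau$ of arity $k$. $\mathbf C_\tau=(C,\sigma^{\mathbf C})_{\sigma\in\tau}$ is the $\tau$-reduct. $\mathbf C$ is minimal if $C$ equals the smallest subset of $C$ containing all $\mathsf e_i^{\mathbf C}$ and closed under the operations $\sigma^{\mathbf C}$ ($\sigma\in\tau$). For a variety $\mathcal V$ of $\tau$-algebras with free algebra $\mathbf F_{\mathcal V}$ over $\{v_1,v_2,\dots\}$, the clone $\mathcal V$-algebra is $(\mathbf F_{\mathcal V},q_n^{\mathbf F},\mathsf e_i^{\mathbf F})$ with $\mathsf e_i^{\mathbf F}=v_i$ and $q_n^{\mathbf F}(a,b_1,\dots,b_n)=s(a)$, $s$ the unique endomorphism with $s(v_i)=b_i$ ($i\le n$) and $s(v_i)=v_i$ ($i>n$). In (ii), the identification is via the free generators $\mathsf e_i^{\mathbf C}$ playing the role of $v_i$. *)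

From mathcomp Require Import all_boot.
Set Implicit Arguments. Unset Strict Implicit. Unset Printing Implicit Defensive.

Record signature := Signature { sym :> Type; arity : sym -> nat }.

Record algebra (S : signature) := Algebra {
  carrier :> Type;
  op : forall s : S, ('I_(arity s) -> carrier) -> carrier }.
Arguments op {S} a s _.
Arguments Algebra {S} carrier op.

Inductive term (S : signature) : Type :=
| Var : nat -> term S
| App : forall s : S, ('I_(arity s) -> term S) -> term S.

Fixpoint eval (S : signature) (A : algebra S) (v : nat -> A) (t : term S) : A :=
  match t with
  | Var x => v x
  | App s ts => op A s (fun i => @eval S A v (ts i))
  end.
Arguments eval {S} A v t.

Definition satisfies (S : signature) (A : algebra S) (t1 t2 : term S) : Prop :=
  forall v : nat -> A, eval A v t1 = eval A v t2.
Arguments satisfies {S} A t1 t2.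

(* Var A : the variety generated by A, i.e. the class of all S-algebras
   satisfying every identity valid in A (Birkhoff: = HSP(A)). *)
Definition in_var (S : signature) (A B : algebra S) : Prop :=
  forall t1 t2 : term S, satisfies A t1 t2 -> satisfies B t1 t2.
Arguments in_var {S} A B.

Definition is_hom (S : signature) (A B : algebra S) (f : A -> B) : Prop :=
  forall (s : S) (args : 'I_(arity s) -> A), f (op A s args) = op B s (fun i => f (args i)).
Arguments is_hom {S} A B f.

Inductive generated (S : signature) (A : algebra S) (X : A -> Prop) : A -> Prop :=
| gen_base : forall x, X x -> @generated S A X x
| gen_op : forall (s : S) (args : 'I_(arity s) -> A),
    (forall i, @generated S A X (args i)) -> @generated S A X (op A s args).
Arguments generated {S} A X _.

Definition free_over (S : signature) (V : algebra S -> Prop) (F : algebra S)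
    (X : Type) (g : X -> F) : Prop :=
  [/\ V F,
      (forall y : F, generated F (fun z => exists x, g x = z) y)
    & forall B : algebra S, V B -> forall h : X -> B,
        (exists f : F -> B, is_hom F B f /\ forall x, f (g x) = h x) /\
        (forall f1 f2 : F -> B, is_hom F B f1 -> is_hom F B f2 ->
           (forall x, f1 (g x) = h x) -> (forall x, f2 (g x) = h x) ->
           forall y, f1 y = f2 y)].
Arguments free_over {S} V F {X} g.

(* Signature of clone tau-algebras: tau, plus q_n (arity n+1), plus nullary e_i.
   CONVENTION: CE i stands for e_(i+1) (i : nat), so e_1, e_2, ... are CE 0, CE 1, ... *)
Inductive clone_sym (tau : signature) : Type :=
| CTau : tau -> clone_sym tau
| CQ : nat -> clone_sym tau
| CE : nat -> clone_sym tau.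

Definition clone_arity (tau : signature) (c : clone_sym tau) : nat :=
  match c with CTau s => arity s | CQ n => n.+1 | CE _ => 0 end.

Definition clone_sig (tau : signature) : signature :=
  Signature (@clone_arity tau).

Definition ord0_elim (T : Type) (k : 'I_0) : T.
Proof. by case: k. Defined.

Definition eop (tau : signature) (C : algebra (clone_sig tau)) (i : nat) : C :=
  op C (CE tau i) (@ord0_elim C).
Arguments eop {tau} C i.

(* q_n(x, y_1, ..., y_n) where ys j = y_(j+1) (only j < n matters) *)
Definition qop (tau : signature) (C : algebra (clone_sig tau)) (n : nat) (x : C)
    (ys : nat -> C) : C :=
  op C (CQ tau n) (fun k : 'I_n.+1 => if val k is j.+1 then ys j else x).
Arguments qop {tau} C n x ys.

Definition tauop (tau : signature) (C : algebra (clone_sig tau)) (s : tau)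
    (args : 'I_(arity s) -> C) : C := op C (CTau s) args.
Arguments tauop {tau} C s args.

Definition is_clone_algebra (tau : signature) (C : algebra (clone_sig tau)) : Prop :=
  (forall n ys i, i < n -> qop C n (eop C i) ys = ys i) /\
  (forall n ys j, n <= j -> qop C n (eop C j) ys = eop C j) /\
  (forall n x, qop C n x (eop C) = x) /\
  (forall k n x ys, k < n ->
              qop C k x ys = qop C n x (fun j => if j < k then ys j else eop C j)) /\
  (forall n x ys zs,
              qop C n (qop C n x ys) zs = qop C n x (fun j => qop C n (ys j) zs)) /\
  (forall n (s : tau) args ys,
              qop C n (tauop C s args) ys = tauop C s (fun i => qop C n (args i) ys)).

Arguments is_clone_algebra {tau} C.

Definition reduct (tau : signature) (C : algebra (clone_sig tau)) : algebra tau :=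
  @Algebra tau (carrier C) (fun (s : tau) (args : 'I_(arity s) -> C) => tauop C s args).
Arguments reduct {tau} C.

Definition minimal (tau : signature) (C : algebra (clone_sig tau)) : Prop :=
  forall x : C, generated (reduct C) (fun y => exists i, eop C i = y) x.
Arguments minimal {tau} C.

From mathcomp Require Import all_boot.
From Stdlib Require Import IndefiniteDescription FunctionalExtensionality.

(* Minimality says that every element of C is the value of a tau-term at the
   generic point (e_1, e_2, ...).  By (C1) and (C6), [q_m(-, v)] is an
   endomorphism of C_tau sending e_i to v_i for i < m, so the value of a term
   at any point v is q_m applied to its value at the generic point: an
   equation holding at the generic point is an identity of C_tau.  This gives
   (i), and (ii) is the uniqueness of endomorphisms of the generated algebra
   C_tau.  For (iii), replacing every variable v_i by the constant e_i turns
   an equation at the generic point into an identity between closed terms of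
   C, which then holds in every member of Var(C). *)

Set Implicit Arguments.
Unset Strict Implicit.
Unset Printing Implicit Defensive.

Section Terms.

Variable S : signature.
Implicit Types (A B : algebra S) (t : term S).

Fixpoint vars_bound t : nat :=
  match t with
  | Var x => x.+1
  | App s ts => \max_(i < arity s) vars_bound (ts i)
  end.

Lemma eq_eval A (v w : nat -> A) t :
  (forall i, i < vars_bound t -> v i = w i) -> eval A v t = eval A w t.
Proof.
elim: t => [x /= -> //|s ts IH] /= vw.
congr (op A s); apply: functional_extensionality => i; apply: IH => j lt_j.
by apply: vw; apply: leq_trans lt_j (leq_bigmax i).
Qed.

Lemma eval_hom A B (f : A -> B) (v : nat -> A) t :
  is_hom A B f -> f (eval A v t) = eval B (f \o v) t.
Proof.
move=> homf; elim: t => [//|s ts IH] /=.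
by rewrite homf; congr (op B s); apply: functional_extensionality.
Qed.

Lemma generated_trans A (X Y : A -> Prop) a :
  (forall x, X x -> generated A Y x) -> generated A X a -> generated A Y a.
Proof. by move=> XY; elim=> [x /XY //|s args _ IH]; apply: gen_op. Qed.

Lemma hom_eq_on_generated A B (X : A -> Prop) (f1 f2 : A -> B) a :
  is_hom A B f1 -> is_hom A B f2 -> (forall x, X x -> f1 x = f2 x) ->
  generated A X a -> f1 a = f2 a.
Proof.
move=> hom1 hom2 eqX; elim=> [x /eqX //|s args _ IH].
by rewrite hom1 hom2; congr (op B s); apply: functional_extensionality.
Qed.

Lemma generated_eval A (g : nat -> A) a :
  generated A (fun z => exists i, g i = z) a -> exists t, eval A g t = a.
Proof.
elim=> [x [i <-]|s args _ IH]; first by exists (Var S i).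
have [ts evalts] := fin_all_exists IH.
by exists (App ts); congr (op A s); apply: functional_extensionality.
Qed.

Lemma exists_hom_eval A B (v : nat -> A) (w : nat -> B) :
  (forall a, exists t, eval A v t = a) ->
  (forall t1 t2, eval A v t1 = eval A v t2 -> eval B w t1 = eval B w t2) ->
  exists f, is_hom A B f /\ forall t, f (eval A v t) = eval B w t.
Proof.
move=> onto ker_sub.
pose pick a := proj1_sig (constructive_indefinite_description _ (onto a)).
have pickK a : eval A v (pick a) = a.
  exact: proj2_sig (constructive_indefinite_description _ (onto a)).
exists (fun a => eval B w (pick a)); split=> [s args|t]; last first.
  by apply: ker_sub; rewrite pickK.
apply: (ker_sub _ (App (fun i => pick (args i)))); rewrite pickK /=.
by congr (op A s); apply: functional_extensionality => i; rewrite pickK.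
Qed.

End Terms.

Section CloneAlgebras.

Variable tau : signature.
Implicit Types C : algebra (clone_sig tau).

Lemma generated_reduct C (X : C -> Prop) a :
  generated (reduct C) X a -> generated C X a.
Proof. by elim=> [x|s args _ IH]; [apply: gen_base | exact: (@gen_op _ C _ (CTau s))]. Qed.

Fixpoint close (t : term (clone_sig tau)) : term (clone_sig tau) :=
  match t with
  | Var i => @App (clone_sig tau) (CE tau i) (@ord0_elim _)
  | App s ts => App (fun k => close (ts k))
  end.

Lemma eval_close C (v : nat -> C) t : eval C v (close t) = eval C (eop C) t.
Proof.
elim: t => [i|s ts IH] /=.
  by congr (op C (CE tau i)); apply: functional_extensionality; case.
by congr (op C s); apply: functional_extensionality.
Qed.

Lemma qop_hom C n (ys : nat -> C) :
  is_clone_algebra C -> is_hom (reduct C) (reduct C) (fun a => qop C n a ys).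
Proof. by move=> [_ [_ [_ [_ [_ C6]]]]] s args; apply: C6. Qed.

Lemma eval_eop_subst C m (v : nat -> C) (t : term tau) :
  is_clone_algebra C -> vars_bound t <= m ->
  eval (reduct C) v t = qop C m (eval (reduct C) (eop C) t) v.
Proof.
move=> HC le_tm; have [C1 _] := HC.
rewrite (eval_hom _ _ (qop_hom m v HC)); apply: eq_eval => i lt_it /=.
by rewrite C1 //; apply: leq_trans le_tm.
Qed.

Lemma satisfies_reduct_eval_eop C (t1 t2 : term tau) :
  is_clone_algebra C ->
  eval (reduct C) (eop C) t1 = eval (reduct C) (eop C) t2 ->
  satisfies (reduct C) t1 t2.
Proof.
move=> HC eq_t v; pose m := maxn (vars_bound t1) (vars_bound t2).
by rewrite !(eval_eop_subst (m := m) v HC) ?leq_maxl ?leq_maxr ?eq_t.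
Qed.

Lemma satisfies_close C (t1 t2 : term (clone_sig tau)) :
  eval C (eop C) t1 = eval C (eop C) t2 -> satisfies C (close t1) (close t2).
Proof. by move=> eq_t v; rewrite !eval_close. Qed.

Variable C : algebra (clone_sig tau).
Hypotheses (HC : is_clone_algebra C) (minC : minimal C).

Lemma minimal_eval_eop (a : reduct C) : exists t, eval (reduct C) (eop C) t = a.
Proof. exact: generated_eval (minC a). Qed.

Lemma reduct_free_over_eop :
  free_over (in_var (reduct C)) (reduct C) (fun i : nat => eop C i).
Proof.
split=> // B varB h; split=> [|f1 f2 hom1 hom2 eq1 eq2 a].
- have [|f [homf evalf]] := exists_hom_eval minimal_eval_eop (w := h).
    by move=> t1 t2 /(satisfies_reduct_eval_eop HC)/varB.
  by exists f; split=> // i; apply: (evalf (Var tau i)).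
- by apply: hom_eq_on_generated hom1 hom2 _ (minC a) => _ [i <-]; rewrite eq1 eq2.
Qed.

Lemma qop_endomorphism n (a : C) (b : nat -> C) (s : C -> C) :
  is_hom (reduct C) (reduct C) s ->
  (forall j, j < n -> s (eop C j) = b j) ->
  (forall j, n <= j -> s (eop C j) = eop C j) ->
  qop C n a b = s a.
Proof.
have [C1 [C2 _]] := HC; move=> homs s_lt s_ge.
apply: hom_eq_on_generated (qop_hom n b HC) homs _ (minC a) => _ [j <-].
by case: (ltnP j n) => [lt_jn|le_nj] /=; [rewrite C1 ?s_lt | rewrite C2 ?s_ge].
Qed.

Lemma generated_empty (a : C) :
  generated C (fun z => exists x : Empty_set, match x with end = z) a.
Proof.
apply: generated_trans (generated_reduct (minC a)) => _ [i <-].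
by apply: gen_op; case.
Qed.

Lemma free_over_empty :
  free_over (in_var C) C (fun e : Empty_set => match e with end).
Proof.
split=> [t1 t2 //|a|B varB h]; first exact: generated_empty.
split=> [|f1 f2 hom1 hom2 _ _ a].
- have [||f [homf _]] := exists_hom_eval (w := eop B) (v := eop C).
  + by move=> a; have [t <-] := generated_eval (generated_reduct (minC a)); exists t.
  + move=> t1 t2 /satisfies_close/varB eq_t.
    by rewrite -(eval_close (eop B) t1) -(eval_close (eop B) t2) eq_t.
  by exists f; split=> [//|[]].
- by apply: hom_eq_on_generated hom1 hom2 _ (generated_empty a) => _ [[]].
Qed.

End CloneAlgebras.

Theorem theorem11p8 (tau : signature) (C : algebra (clone_sig tau)) :
  is_clone_algebra C -> minimal C ->
  (* (i) C_tau is free in Var(C_tau) over e_1, e_2, ... *)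
  free_over (in_var (reduct C)) (reduct C) (fun i : nat => eop C i)
  (* (ii) C is the clone Var(C_tau)-algebra (with e_i in the role of v_i):
     q_n(a, b_1..b_n) = s(a), s the endomorphism with s(e_i)=b_i (i<=n), s(e_i)=e_i (i>n) *)
  /\ (forall (n : nat) (a : C) (b : nat -> C) (s : C -> C),
        is_hom (reduct C) (reduct C) s ->
        (forall j, j < n -> s (eop C j) = b j) ->
        (forall j, n <= j -> s (eop C j) = eop C j) ->
        qop C n a b = s a)
  (* (iii) C is free over the empty set in Var(C) *)
  /\ free_over (in_var C) C (fun e : Empty_set => match e with end).
Proof.
move=> HC minC; split; first exact: reduct_free_over_eop.
split; [exact: qop_endomorphism | exact: free_over_empty].
Qed.
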